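(* Let $\lambda,\mu,\rho,\mathsf D>0$, $X=\mathbb R$, $Y=[-\frac12\mathsf D,\frac12\mathsf D]$, and let $\hat f=\hat f_1$, i.e. $\hat f(x,y)=f(x,\hat y)+\partial_y f(x,\hat y)(y-\hat y)$. 1. If $\mu\le\sqrt{\lambda\rho/2}$, then for $f=F_{1,-1,\lambda,\mu,\rho}$ there exist $\hat y\in Y$ and $x^*\in\mathbb R$ such that $\hat\varphi_{2\lambda}'(x^* )=0$ while $|\varphi_{2\lambda}'(x^* )|\ge\frac{\mu\mathsf D}{3}$. 2. If $\mu\ge\sqrt{\lambda\rho/2}$, then there exist $\bar\mu\le\mu$, $\bar\rho\le\rho$, $\hat y\in Y$ and $x^*\in\mathbb R$ such that, for $f=F_{1,1,\lambda,\bar\mu,\bar\rho}$, $\hat\varphi_{2\lambda}'(x^* )=0$ while $|\varphi_{2\lambda}'(x^* )|\ge\sqrt{\frac{\lambda\rho\mathsf D^2}{8}}$.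
   Context: For $k\in\mathbb N\cup\{0\}$, $s\in\{\pm1,0\}$, $\lambda>0$, $\mu\ge0$, $\rho\ge0$: $F_{k,s,\lambda,\mu,\rho}(x,y)=-\frac{\lambda x^2}{2}+\mu xy+\frac{s\rho|y|^{k+1}}{(k+1)!}$ on $\mathbb R\times\mathbb R$. Given $f$, $X,Y\subseteq\mathbb R$ and $\hat y\in Y$: $\varphi(x)=\max_{y\in Y}f(x,y)$, $\hat\varphi(x)=\max_{y\in Y}\hat f(x,y)$, and for a function $\phi$ on $X$, $\phi_{2\lambda}(x)=\min_{u\in X}\{\phi(u)+\lambda(u-x)^2\}$ (Moreau envelope with parameter $2\lambda$); $'$ denotes the derivative in $x$. *)

From Stdlib Require Import Reals.
From Coquelicot Require Export Coquelicot.
Open Scope R_scope.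

Definition Fk (k : nat) (s lam mu rho : R) (x y : R) : R :=
  - (lam * x ^ 2) / 2 + mu * x * y + s * rho * (Rabs y) ^ (k + 1) / INR (Stdlib.Arith.Factorial.fact (k + 1)).

Definition Ybox (D : R) (y : R) : Prop := - D / 2 <= y /\ y <= D / 2.

(* max_{y in Y} g y (taken as the supremum; it is attained in our uses) *)
Definition maxOver (Y : R -> Prop) (g : R -> R) : R :=
  real (Lub_Rbar (fun z => exists y, Y y /\ z = g y)).

Definition phi (f : R -> R -> R) (Y : R -> Prop) (x : R) : R := maxOver Y (f x).

Definition fhat (f : R -> R -> R) (yhat : R) (x y : R) : R :=
  f x yhat + Derive (fun t => f x t) yhat * (y - yhat).

(* Moreau envelope with parameter 2 lam, X = R:
   phi_{2lam}(x) = min_{u in R} { phi(u) + lam (u - x)^2 } (as infimum) *)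
Definition moreau2 (lam : R) (ph : R -> R) (x : R) : R :=
  real (Glb_Rbar (fun z => exists u, z = ph u + lam * (u - x) ^ 2)).

From Stdlib Require Import Reals Lra Psatz.
From Coquelicot Require Import Coquelicot.
Open Scope R_scope.

(* The Moreau envelope M(x) = min_u max_y [f(u,y) + lam (u - x)^2] lies between the
   max-min value on a fixed slice y = y0, which is the envelope of a concave quadratic in u,
   and the value max_y f(u0(x), y) + lam (u0(x) - x)^2 at a chosen u0(x).  For F_{1,s} and
   its linearizations both bounds are explicit quadratics in x, and choosing y0, u0 so that
   they touch at xs with equal slopes fixes M'(xs) by a squeeze.  With yhat = 0 and s = -1
   the linearized envelope is stationary at xs = mu D / (2 lam) while the true one has slope
   mu D (mu^2 - lam rho) / (lam rho + mu^2); with s = 1, mu = sqrt (lam rho / 2) and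
   yhat = -D/8, the linearized envelope is stationary at xs = mu D / (4 lam) while the true
   one has slope mu D / 2. *)

Lemma Lub_Rbar_real_bounds (E : R -> Prop) x0 B :
  E x0 -> (forall x, E x -> x <= B) ->
  (forall x, E x -> x <= real (Lub_Rbar E)) /\ real (Lub_Rbar E) <= B.
Proof.
  intros Ex0 HB; destruct (Lub_Rbar_correct E) as [ub least].
  assert (le_B : Rbar_le (Lub_Rbar E) B) by (apply least; intros x Ex; apply HB, Ex).
  assert (ge_x0 := ub x0 Ex0).
  destruct (Lub_Rbar E) as [l | |]; simpl in *; try contradiction.
  split; [exact ub | exact le_B].
Qed.

Lemma Glb_Rbar_real_bounds (E : R -> Prop) x0 m :
  E x0 -> (forall x, E x -> m <= x) ->
  (forall x, E x -> real (Glb_Rbar E) <= x) /\ m <= real (Glb_Rbar E).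
Proof.
  intros Ex0 Hm; destruct (Glb_Rbar_correct E) as [lb greatest].
  assert (ge_m : Rbar_le m (Glb_Rbar E)) by (apply greatest; intros x Ex; apply Hm, Ex).
  assert (le_x0 := lb x0 Ex0).
  destruct (Glb_Rbar E) as [l | |]; simpl in *; try contradiction.
  split; [exact lb | exact ge_m].
Qed.

Lemma maxOver_ge (Y : R -> Prop) g B y :
  (forall z, Y z -> g z <= B) -> Y y -> g y <= maxOver Y g.
Proof.
  intros HB Yy; apply (Lub_Rbar_real_bounds _ (g y) B).
  - exists y; auto.
  - intros _ [z [Yz ->]]; auto.
  - exists y; auto.
Qed.

Lemma maxOver_le (Y : R -> Prop) g B y0 :
  Y y0 -> (forall y, Y y -> g y <= B) -> maxOver Y g <= B.
Proof.
  intros Yy0 HB; apply (Lub_Rbar_real_bounds _ (g y0) B).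
  - exists y0; auto.
  - intros _ [z [Yz ->]]; auto.
Qed.

Lemma moreau2_le lam ph x m u :
  (forall v, m <= ph v + lam * (v - x) ^ 2) -> moreau2 lam ph x <= ph u + lam * (u - x) ^ 2.
Proof.
  intros Hm; apply (Glb_Rbar_real_bounds _ (ph u + lam * (u - x) ^ 2) m).
  - exists u; auto.
  - intros _ [v ->]; auto.
  - exists u; auto.
Qed.

Lemma moreau2_ge lam ph x m :
  (forall v, m <= ph v + lam * (v - x) ^ 2) -> m <= moreau2 lam ph x.
Proof.
  intros Hm; apply (Glb_Rbar_real_bounds _ (ph 0 + lam * (0 - x) ^ 2) m).
  - exists 0; auto.
  - intros _ [v ->]; auto.
Qed.

Lemma is_derive_squeeze (L h U : R -> R) x0 l delta :
  0 < delta -> (forall x, Rabs (x - x0) < delta -> L x <= h x <= U x) ->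
  L x0 = U x0 -> is_derive L x0 l -> is_derive U x0 l -> is_derive h x0 l.
Proof.
  intros Hdelta squeeze LU0 HL HU.
  apply is_derive_Reals in HL, HU; apply is_derive_Reals; intros eps Heps.
  destruct (HL eps Heps) as [dL HdL], (HU eps Heps) as [dU HdU].
  assert (h0 : h x0 = L x0).
  { destruct (squeeze x0); [rewrite Rminus_diag, Rabs_R0; exact Hdelta | lra]. }
  assert (Hd : 0 < Rmin delta (Rmin dL dU))
    by (apply Rmin_pos; [exact Hdelta | apply Rmin_pos; apply cond_pos]).
  exists (mkposreal _ Hd); intros e e_nz He; simpl in He.
  apply Rmin_Rgt in He as [He_delta He]; apply Rmin_Rgt in He as [He_L He_U].
  specialize (HdL e e_nz He_L); specialize (HdU e e_nz He_U).
  destruct (squeeze (x0 + e)) as [Le eU]; [replace (x0 + e - x0) with e by ring; exact He_delta |].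
  set (qL := (L (x0 + e) - L x0) / e) in HdL; set (qU := (U (x0 + e) - U x0) / e) in HdU.
  set (qh := (h (x0 + e) - h x0) / e).
  (* both products below are nonnegative, so [qh] lies between [qL] and [qU] *)
  assert (below : (qh - qL) * e = h (x0 + e) - L (x0 + e))
    by (unfold qh, qL; rewrite h0; field; exact e_nz).
  assert (above : (qU - qh) * e = U (x0 + e) - h (x0 + e))
    by (unfold qh, qU; rewrite h0, LU0; field; exact e_nz).
  apply Rabs_def2 in HdL, HdU.
  destruct (Rdichotomy _ _ e_nz) as [e_neg | e_pos]; apply Rabs_def1; unfold Rgt in *; nra.
Qed.

(* the Moreau envelope of [u |-> - lam u^2 / 2 + beta u + gamma], attained at [u = 2 x - beta / lam] *)
Definition quad_envelope (lam beta gamma x : R) : R :=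
  lam * x ^ 2 + gamma - (beta - 2 * lam * x) ^ 2 / (2 * lam).

Lemma quad_envelope_le lam beta gamma x u : 0 < lam ->
  quad_envelope lam beta gamma x <= - (lam * u ^ 2) / 2 + beta * u + gamma + lam * (u - x) ^ 2.
Proof.
  intros Hlam; unfold quad_envelope.
  assert (E : - (lam * u ^ 2) / 2 + beta * u + gamma + lam * (u - x) ^ 2
              - (lam * x ^ 2 + gamma - (beta - 2 * lam * x) ^ 2 / (2 * lam))
              = (lam * u + beta - 2 * lam * x) ^ 2 / (2 * lam)) by (field; lra).
  assert (0 <= (lam * u + beta - 2 * lam * x) ^ 2 / (2 * lam))
    by (apply Rdiv_le_0_compat; [apply pow2_ge_0 | lra]).
  lra.
Qed.

Lemma is_derive_quad_envelope lam beta gamma x : 0 < lam ->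
  is_derive (quad_envelope lam beta gamma) x (2 * beta - 2 * lam * x).
Proof. intros Hlam; unfold quad_envelope; auto_derive; [auto | field; lra]. Qed.

Section Envelope.

Variables (f : R -> R -> R) (Y : R -> Prop) (lam : R).
Hypothesis lam_pos : 0 < lam.
Hypothesis f_bounded : forall u, exists B, forall y, Y y -> f u y <= B.

Lemma moreau2_phi_bounds x y0 beta gamma u0 B :
  Y y0 -> (forall u, f u y0 = - (lam * u ^ 2) / 2 + beta * u + gamma) ->
  (forall y, Y y -> f u0 y <= B) ->
  quad_envelope lam beta gamma x <= moreau2 lam (phi f Y) x <= B + lam * (u0 - x) ^ 2.
Proof.
  intros Yy0 slice HB.
  assert (lower : forall u, quad_envelope lam beta gamma x <= phi f Y u + lam * (u - x) ^ 2).
  { intros u; destruct (f_bounded u) as [Bu HBu].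
    pose proof (maxOver_ge Y (f u) Bu y0 HBu Yy0 : f u y0 <= phi f Y u).
    pose proof (quad_envelope_le lam beta gamma x u lam_pos); rewrite <- slice in *; lra. }
  split; [exact (moreau2_ge _ _ _ _ lower) |].
  eapply Rle_trans; [exact (moreau2_le _ _ _ _ u0 lower) |].
  apply Rplus_le_compat_r; exact (maxOver_le Y (f u0) B y0 Yy0 HB).
Qed.

Lemma is_derive_moreau2_phi x0 l delta y0 beta gamma (u0 B : R -> R) :
  0 < delta -> Y y0 -> (forall u, f u y0 = - (lam * u ^ 2) / 2 + beta * u + gamma) ->
  (forall x, Rabs (x - x0) < delta -> forall y, Y y -> f (u0 x) y <= B x) ->
  quad_envelope lam beta gamma x0 = B x0 + lam * (u0 x0 - x0) ^ 2 ->
  2 * beta - 2 * lam * x0 = l ->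
  is_derive (fun x => B x + lam * (u0 x - x) ^ 2) x0 l ->
  is_derive (moreau2 lam (phi f Y)) x0 l.
Proof.
  intros Hdelta Yy0 slice HB touch slope HU.
  apply (is_derive_squeeze (quad_envelope lam beta gamma) _
    (fun x => B x + lam * (u0 x - x) ^ 2) x0 l delta Hdelta); auto.
  - intros x Hx; exact (moreau2_phi_bounds x y0 beta gamma (u0 x) (B x) Yy0 slice (HB x Hx)).
  - rewrite <- slope; apply is_derive_quad_envelope, lam_pos.
Qed.

End Envelope.

Lemma Fk1_eq s lam mu rho x y :
  Fk 1 s lam mu rho x y = - (lam * x ^ 2) / 2 + mu * x * y + s * rho * y ^ 2 / 2.
Proof. unfold Fk; simpl plus; rewrite pow2_abs; simpl; field. Qed.

Lemma fhat_Fk1_eq s lam mu rho yh u y :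
  fhat (Fk 1 s lam mu rho) yh u y =
  - (lam * u ^ 2) / 2 + mu * u * yh + s * rho * yh ^ 2 / 2 + (mu * u + s * rho * yh) * (y - yh).
Proof.
  unfold fhat; rewrite Fk1_eq; do 2 f_equal.
  apply is_derive_unique.
  apply (is_derive_ext (fun t => - (lam * u ^ 2) / 2 + mu * u * t + s * rho * t ^ 2 / 2)).
  - intros t; rewrite Fk1_eq; reflexivity.
  - auto_derive; [auto | field].
Qed.

Lemma Ybox_quadratic_bounded D a b c :
  exists B, forall y, Ybox D y -> a + b * y + c * y ^ 2 <= B.
Proof.
  exists (Rabs a + Rabs b * Rabs D + Rabs c * D ^ 2); intros y [lo hi].
  assert (Hy : Rabs y <= Rabs D) by (apply Rabs_le; rewrite Rabs_pos_eq; lra).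
  assert (a <= Rabs a) by apply Rle_abs.
  assert (b * y <= Rabs b * Rabs D).
  { eapply Rle_trans; [apply Rle_abs | rewrite Rabs_mult; apply Rmult_le_compat_l; auto using Rabs_pos]. }
  assert (c * y ^ 2 <= Rabs c * D ^ 2).
  { eapply Rle_trans; [apply Rle_abs |].
    rewrite Rabs_mult, <- RPow_abs, <- (pow2_abs D).
    apply Rmult_le_compat_l; [apply Rabs_pos | apply pow_incr; auto using Rabs_pos]. }
  lra.
Qed.

Lemma Fk1_bounded s lam mu rho D u :
  exists B, forall y, Ybox D y -> Fk 1 s lam mu rho u y <= B.
Proof.
  destruct (Ybox_quadratic_bounded D (- (lam * u ^ 2) / 2) (mu * u) (s * rho / 2)) as [B HB].
  exists B; intros y Yy; rewrite Fk1_eq; specialize (HB y Yy); lra.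
Qed.

Lemma fhat_Fk1_bounded s lam mu rho yh D u :
  exists B, forall y, Ybox D y -> fhat (Fk 1 s lam mu rho) yh u y <= B.
Proof.
  set (b := mu * u + s * rho * yh).
  destruct (Ybox_quadratic_bounded D
    (- (lam * u ^ 2) / 2 + mu * u * yh + s * rho * yh ^ 2 / 2 - b * yh) b 0) as [B HB].
  exists B; intros y Yy; rewrite fhat_Fk1_eq; specialize (HB y Yy); fold b; lra.
Qed.

Lemma Ybox_mem D y : - (D / 2) <= y <= D / 2 -> Ybox D y.
Proof. unfold Ybox; lra. Qed.

Lemma is_derive_envelope_fhat_concave lam mu rho D : 0 < lam -> 0 < mu -> 0 < D ->
  is_derive (moreau2 lam (phi (fhat (Fk 1 (-1) lam mu rho) 0) (Ybox D))) (mu * D / (2 * lam)) 0.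
Proof.
  intros Hlam Hmu HD; set (c := mu * D / (2 * lam)).
  assert (Hc : 0 < c) by (unfold c; apply Rdiv_lt_0_compat; nra).
  apply (is_derive_moreau2_phi _ (Ybox D) lam Hlam (fhat_Fk1_bounded _ _ _ _ _ D))
    with (delta := c / 2) (y0 := D / 2) (beta := mu * D / 2) (gamma := 0)
         (u0 := fun x => 2 * x - c) (B := fun x => - (lam * (2 * x - c) ^ 2) / 2 + mu * D / 2 * (2 * x - c)).
  - lra.
  - apply Ybox_mem; lra.
  - intros u; rewrite fhat_Fk1_eq; field.
  - intros x Hx y [lo hi]; apply Rabs_def2 in Hx; rewrite fhat_Fk1_eq.
    assert (mu * (2 * x - c) * y <= mu * (2 * x - c) * (D / 2))
      by (apply Rmult_le_compat_l; [apply Rmult_le_pos |]; lra).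
    lra.
  - unfold quad_envelope, c; field; lra.
  - unfold c; field; lra.
  - auto_derive; [auto | unfold c; field; lra].
Qed.

Lemma is_derive_envelope_concave lam mu rho D :
  0 < lam -> 0 < rho -> 0 < D -> mu ^ 2 <= lam * rho ->
  is_derive (moreau2 lam (phi (Fk 1 (-1) lam mu rho) (Ybox D))) (mu * D / (2 * lam))
    (mu * D * (mu ^ 2 - lam * rho) / (lam * rho + mu ^ 2)).
Proof.
  intros Hlam Hrho HD Hmu2; set (K := lam * rho + mu ^ 2); set (ys := mu ^ 2 * D / K).
  assert (HK : 0 < K) by (unfold K; nra).
  assert (Yys : Ybox D ys).
  { apply Ybox_mem; unfold ys; split.
    - assert (0 <= mu ^ 2 * D / K) by (apply Rdiv_le_0_compat; nra); lra.
    - apply Rmult_le_reg_r with K; auto; unfold Rdiv; rewrite Rmult_assoc, Rinv_l by lra.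
      unfold K; nra. }
  (* with [xs := mu D / (2 lam)], [(u0 xs, ys)] is a saddle point of [f u y + lam (u - xs)^2];
     [B x] is the maximum of [f (u0 x)] over all real [y] *)
  apply (is_derive_moreau2_phi _ (Ybox D) lam Hlam (Fk1_bounded _ _ _ _ D))
    with (delta := 1) (y0 := ys) (beta := mu * ys) (gamma := - rho * ys ^ 2 / 2)
         (u0 := fun x => 2 * lam * rho / K * x)
         (B := fun x => - (lam * (2 * lam * rho / K * x) ^ 2) / 2
                        + mu ^ 2 * (2 * lam * rho / K * x) ^ 2 / (2 * rho)).
  - lra.
  - exact Yys.
  - intros u; rewrite Fk1_eq; field.
  - intros x _ y _; rewrite Fk1_eq; set (u := 2 * lam * rho / K * x).
    assert (E : - (lam * u ^ 2) / 2 + mu ^ 2 * u ^ 2 / (2 * rho)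
                - (- (lam * u ^ 2) / 2 + mu * u * y + -1 * rho * y ^ 2 / 2)
                = (rho * y - mu * u) ^ 2 / (2 * rho)) by (field; lra).
    assert (0 <= (rho * y - mu * u) ^ 2 / (2 * rho))
      by (apply Rdiv_le_0_compat; [apply pow2_ge_0 | lra]).
    lra.
  - unfold quad_envelope, ys, K; field; split; nra.
  - unfold ys, K; field; split; nra.
  - auto_derive; [auto | unfold K; field; split; nra].
Qed.

Lemma is_derive_envelope_convex lam m rho D : 0 < lam -> 0 < rho -> 0 < D ->
  is_derive (moreau2 lam (phi (Fk 1 1 lam m rho) (Ybox D))) (m * D / (4 * lam)) (m * D / 2).
Proof.
  intros Hlam Hrho HD.
  apply (is_derive_moreau2_phi _ (Ybox D) lam Hlam (Fk1_bounded _ _ _ _ D))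
    with (delta := 1) (y0 := D / 2) (beta := m * D / 2) (gamma := rho * (D / 2) ^ 2 / 2)
         (u0 := fun _ => 0) (B := fun _ => rho * D ^ 2 / 8).
  - lra.
  - apply Ybox_mem; lra.
  - intros u; rewrite Fk1_eq; field.
  - intros x _ y [lo hi]; rewrite Fk1_eq.
    assert (rho * y ^ 2 <= rho * (D ^ 2 / 4)) by (apply Rmult_le_compat_l; nra).
    lra.
  - unfold quad_envelope; field; lra.
  - field; lra.
  - auto_derive; [auto | field; lra].
Qed.

Lemma is_derive_envelope_fhat_convex lam m rho D : 0 < lam -> 0 < D ->
  rho = 2 * m ^ 2 / lam ->
  is_derive (moreau2 lam (phi (fhat (Fk 1 1 lam m rho) (- D / 8)) (Ybox D))) (m * D / (4 * lam)) 0.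
Proof.
  intros Hlam HD ->; set (x0 := m * D / (4 * lam)).
  (* at [u = x0] the linearization no longer depends on [y] *)
  assert (flat : m * x0 + 1 * (2 * m ^ 2 / lam) * (- D / 8) = 0) by (unfold x0; field; lra).
  apply (is_derive_moreau2_phi _ (Ybox D) lam Hlam (fhat_Fk1_bounded _ _ _ _ _ D))
    with (delta := 1) (y0 := D / 4) (beta := m * D / 4)
         (gamma := 2 * m ^ 2 / lam * (- D / 8) ^ 2 / 2 + 2 * m ^ 2 / lam * (- D / 8) * (D / 4 - - D / 8))
         (u0 := fun _ => x0)
         (B := fun _ => - (lam * x0 ^ 2) / 2 + m * x0 * (- D / 8) + 2 * m ^ 2 / lam * (- D / 8) ^ 2 / 2).
  - lra.
  - apply Ybox_mem; lra.
  - intros u; rewrite fhat_Fk1_eq; field; lra.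
  - intros x _ y _; rewrite fhat_Fk1_eq, flat; lra.
  - unfold quad_envelope, x0; field; lra.
  - unfold x0; field; lra.
  - auto_derive; [auto | ring].
Qed.

Lemma concave_slope_ge lam mu rho D : 0 < lam -> 0 < mu -> 0 < rho -> 0 < D ->
  mu ^ 2 <= lam * rho / 2 ->
  mu * D / 3 <= Rabs (mu * D * (mu ^ 2 - lam * rho) / (lam * rho + mu ^ 2)).
Proof.
  intros Hlam Hmu Hrho HD Hmu2; set (K := lam * rho + mu ^ 2).
  assert (HK : 0 < K) by (unfold K; nra).
  rewrite <- Rabs_Ropp.
  replace (- (mu * D * (mu ^ 2 - lam * rho) / K))
    with (mu * D / 3 + 2 * (mu * D) * (lam * rho - 2 * mu ^ 2) / (3 * K)) by (unfold K; field; nra).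
  assert (gap : 0 <= 2 * (mu * D) * (lam * rho - 2 * mu ^ 2) / (3 * K))
    by (apply Rdiv_le_0_compat; [apply Rmult_le_pos |]; nra).
  eapply Rle_trans; [| apply Rle_abs]; lra.
Qed.

Theorem proposition4 (lam mu rho D : R) :
  0 < lam -> 0 < mu -> 0 < rho -> 0 < D ->
  (mu <= sqrt (lam * rho / 2) ->
     exists yhat xs : R,
       Ybox D yhat /\
       is_derive (moreau2 lam (phi (fhat (Fk 1 (-1) lam mu rho) yhat) (Ybox D))) xs 0 /\
       exists d : R,
         is_derive (moreau2 lam (phi (Fk 1 (-1) lam mu rho) (Ybox D))) xs d /\
         mu * D / 3 <= Rabs d)
  /\
  (sqrt (lam * rho / 2) <= mu ->
     exists mub rhob yhat xs : R,
       0 <= mub /\ mub <= mu /\ 0 <= rhob /\ rhob <= rho /\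
       Ybox D yhat /\
       is_derive (moreau2 lam (phi (fhat (Fk 1 1 lam mub rhob) yhat) (Ybox D))) xs 0 /\
       exists d : R,
         is_derive (moreau2 lam (phi (Fk 1 1 lam mub rhob) (Ybox D))) xs d /\
         sqrt (lam * rho * D ^ 2 / 8) <= Rabs d).
Proof.
  intros Hlam Hmu Hrho HD; set (m := sqrt (lam * rho / 2)).
  assert (Hm : 0 < m) by (apply sqrt_lt_R0; nra).
  assert (Hm2 : m ^ 2 = lam * rho / 2) by (unfold m; rewrite <- Rsqr_pow2; apply Rsqr_sqrt; nra).
  split; intros Hcase.
  - assert (Hmu2 : mu ^ 2 <= lam * rho / 2) by (rewrite <- Hm2; apply pow_incr; lra).
    exists 0, (mu * D / (2 * lam)); split; [apply Ybox_mem; lra |].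
    split; [apply is_derive_envelope_fhat_concave; auto |].
    exists (mu * D * (mu ^ 2 - lam * rho) / (lam * rho + mu ^ 2)).
    split; [apply is_derive_envelope_concave; auto; nra | apply concave_slope_ge; auto].
  - exists m, rho, (- D / 8), (m * D / (4 * lam)).
    assert (Hrho_m : rho = 2 * m ^ 2 / lam) by (rewrite Hm2; field; lra).
    do 4 (split; [lra |]); split; [apply Ybox_mem; lra |].
    split; [apply is_derive_envelope_fhat_convex; auto |].
    exists (m * D / 2); split; [apply is_derive_envelope_convex; auto |].
    replace (lam * rho * D ^ 2 / 8) with ((m * D / 2) ^ 2)
      by (transitivity (m ^ 2 * D ^ 2 / 4); [field | rewrite Hm2; field]).
    rewrite sqrt_pow2 by nra; apply Rle_abs.
Qed.
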